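(* Let $m \geqslant 2$ and $r \geqslant 4$, and let $\mathcal{A}$ be a multi-family of subsets of $[m]$. If $\mathcal{A}$ is a double cover of $[m]$ and $|\mathcal{A}| \leqslant r$, then $$\left|\Big\{\{A,B\} \in \binom{\mathcal{A}}{2} : A \cap B \neq \emptyset\Big\}\right| \,\leqslant\, \lambda(r)\left(\sum_{A \in \mathcal{A}} |A| - 2m\right) + m.$$
   Context: $\lambda(r) = \frac{\binom{r}{2}-2}{r-2}$. A multi-family $\mathcal{A}$ is a double cover of $X$ if every element of $X$ lies in at least two members of $\mathcal{A}$ (counted with multiplicity). $\binom{\mathcal{A}}{2}$ denotes the unordered pairs of distinct members of the multi-family (members with equal underlying sets count as distinct), and $|\mathcal{A}|$ and the sum count members with multiplicity. *)

From mathcomp Require Import all_boot all_order all_algebra.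
Set Implicit Arguments. Unset Strict Implicit. Unset Printing Implicit Defensive.
Import GRing.Theory Num.Theory.
Local Open Scope ring_scope.

Definition lambda (r : nat) : rat := (('C(r, 2))%:R - 2) / (r%:R - 2).

(* A multi-family of subsets of [m] is a sequence of sets (multiplicity = repetition).
   Double cover: every element lies in at least two members (with multiplicity). *)
Definition double_cover (m : nat) (A : seq {set 'I_m}) : Prop :=
  forall x : 'I_m, (2 <= count (fun S : {set 'I_m} => x \in S) A)%N.

Definition n_intersecting_pairs (m : nat) (A : seq {set 'I_m}) : nat :=
  #|[set p : 'I_(size A) * 'I_(size A) |
      (p.1 < p.2)%N && (nth set0 A p.1 :&: nth set0 A p.2 != set0)]|.

Definition total_size (m : nat) (A : seq {set 'I_m}) : nat :=
  (\sum_(S <- A) #|S|)%N.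

(* Two members of the family meet iff they share a point x, so the number of
   intersecting pairs is at most the sum over x of C(d x, 2), where d x is the
   number of members containing x.  The right-hand side is the sum over x of
   chord (d x) = lambda r * (d x - 2) + 1, the line through (2, C(2,2)) and
   (r, C(r,2) - 1), which by convexity dominates C(d, 2) for 2 <= d < r.  If
   instead some point lies in d x = r members, these are all the (at most r)
   members, so there are at most C(r, 2) pairs, which is the term C(r,2) - 1 of
   that point plus at least 1 from any other point. *)

From mathcomp Require Import all_boot all_order all_algebra.
From mathcomp Require Import zify ring lra.

Set Implicit Arguments.
Unset Strict Implicit.
Unset Printing Implicit Defensive.

Import Order.TTheory GRing.Theory Num.Theory.

Lemma card_bigcup_leq {I T : finType} (F : I -> {set T}) :
  #|\bigcup_i F i| <= \sum_i #|F i|.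
Proof.
elim/big_ind2: _ => [|k B l C leB leC|//]; first by rewrite cards0.
by rewrite (leq_trans (leq_card_setU _ _)) ?leq_add.
Qed.

Lemma set2_ltn_inj n (a b c d : 'I_n) :
  a < b -> c < d -> [set a; b] = [set c; d] -> (a, b) = (c, d).
Proof.
move=> ab cd eq_ab_cd.
have /set2P[] : a \in [set c; d] by rewrite -eq_ab_cd set21.
all: have /set2P[] : b \in [set c; d] by rewrite -eq_ab_cd set22.
all: have /set2P[] : c \in [set a; b] by rewrite eq_ab_cd set21.
all: by do 3!move=> /(congr1 (@nat_of_ord n)) ?; congr pair; apply: ord_inj; lia.
Qed.

Lemma card_ltn_pairs_leq n (D : {set 'I_n}) :
  #|[set p : 'I_n * 'I_n | (p.1 < p.2) && (p.1 \in D) && (p.2 \in D)]|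
    <= 'C(#|D|, 2).
Proof.
set P := [set _ | _]; pose pair_set (p : 'I_n * 'I_n) := [set p.1; p.2].
have pair_set_inj : {in P &, injective pair_set}.
  move=> [a b] [c d]; rewrite !inE /= => /andP[/andP[ab _] _] /andP[/andP[cd _] _].
  exact: set2_ltn_inj.
rewrite -(card_in_imset pair_set_inj) -cards_draws subset_leq_card //.
apply/subsetP => _ /imsetP[[a b] + ->]; rewrite !inE /= => /andP[/andP[ab aD] bD].
rewrite cards2 neq_ltn ab andbT; apply/subsetP => z.
by rewrite !inE => /orP[] /eqP ->.
Qed.

Section Degrees.

Variables (m : nat) (A : seq {set 'I_m}).

Definition degree (x : 'I_m) : nat := count (fun S : {set 'I_m} => x \in S) A.

Definition members_at (x : 'I_m) : {set 'I_(size A)} :=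
  [set i : 'I_(size A) | x \in nth set0 A i].

Lemma card_members_at x : #|members_at x| = degree x.
Proof.
rewrite /degree -sum1_count (big_nth set0) big_mkord -sum1_card.
by apply: eq_bigl => i; rewrite inE.
Qed.

Lemma total_size_degree : total_size A = \sum_x degree x.
Proof.
rewrite /total_size /degree.
under eq_bigr => S _ do rewrite -sum1_card big_mkcond /=.
rewrite exchange_big /=; apply: eq_bigr => x _.
by rewrite -sum1_count [RHS]big_mkcond.
Qed.

Lemma n_intersecting_pairs_le_sum_bin2 :
  n_intersecting_pairs A <= \sum_x 'C(degree x, 2).
Proof.
rewrite /n_intersecting_pairs; set I := [set _ | _].
pose P x := [set p : 'I_(size A) * 'I_(size A) |
  (p.1 < p.2) && (p.1 \in members_at x) && (p.2 \in members_at x)].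
have sub_IP : I \subset \bigcup_x P x.
  apply/subsetP => p; rewrite inE => /andP[lt_p /set0Pn[x]].
  by rewrite inE => /andP[x1 x2]; apply/bigcupP; exists x; rewrite // !inE lt_p x1 x2.
apply: leq_trans (subset_leq_card sub_IP) _; apply: leq_trans (card_bigcup_leq P) _.
by apply: leq_sum => x _; rewrite -card_members_at card_ltn_pairs_leq.
Qed.

Lemma n_intersecting_pairs_le_bin2_size : n_intersecting_pairs A <= 'C(size A, 2).
Proof.
rewrite /n_intersecting_pairs -[X in 'C(X, _)]card_ord -cardsT.
apply: leq_trans (card_ltn_pairs_leq [set: _]).
by apply: subset_leq_card; apply/subsetP => p; rewrite !inE !andbT => /andP[].
Qed.

End Degrees.

Local Open Scope ring_scope.

Lemma natr_bin2 (R : pzRingType) d : 'C(d, 2)%:R * 2 = d%:R * (d%:R - 1) :> R.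
Proof.
case: d => [|d]; first by rewrite bin_small ?mul0r.
by rewrite -natrM mulnC -mul_bin_diag bin1 natrM -(natrB _ (ltn0Sn d)) subn1.
Qed.

Section Chord.

Variable r : nat.
Hypothesis r_ge4 : (4 <= r)%N.

Let r_ge4R : 4 <= r%:R :> rat. Proof. by rewrite (ler_nat _ 4). Qed.

Let subr2_neq0 : r%:R - 2 != 0 :> rat.
Proof. by apply: lt0r_neq0; have := r_ge4R; lra. Qed.

Lemma lambdaE : lambda r = (r%:R + 1) / 2 - (r%:R - 2)^-1.
Proof.
have two_neq0 : 2 != 0 :> rat by [].
by rewrite /lambda -[X in X - 2](mulfK two_neq0) natr_bin2; field.
Qed.

Lemma inv_subr2_le_half : (r%:R - 2)^-1 <= 2^-1 :> rat.
Proof. by rewrite lef_pV2 ?posrE; have := r_ge4R; lra. Qed.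

Lemma lambda_ge0 : 0 <= lambda r.
Proof. by rewrite lambdaE; have := inv_subr2_le_half; have := r_ge4R; lra. Qed.

Definition chord (d : nat) : rat := lambda r * (d%:R - 2) + 1.

Lemma chord_at_r : chord r = 'C(r, 2)%:R - 1.
Proof. by rewrite /chord /lambda divfK // -addrA; congr (_ + _); lra. Qed.

Lemma chord_ge1 d : (2 <= d)%N -> 1 <= chord d.
Proof.
by move=> d_ge2; rewrite /chord lerDr mulr_ge0 ?lambda_ge0 // subr_ge0 (ler_nat _ 2).
Qed.

Lemma bin2_le_chord d : (2 <= d)%N -> (d < r)%N -> 'C(d, 2)%:R <= chord d.
Proof.
move=> d_ge2 d_ltr; have two_neq0 : 2 != 0 :> rat by [].
rewrite /chord lambdaE -subr_ge0 -[_%:R in X in _ - X](mulfK two_neq0) natr_bin2.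
have -> : ((r%:R + 1) / 2 - (r%:R - 2)^-1) * (d%:R - 2) + 1 - d%:R * (d%:R - 1) / 2
  = (d%:R - 2) * ((r%:R - d%:R) / 2 - (r%:R - 2)^-1) :> rat.
  by field.
rewrite mulr_ge0 // ?subr_ge0 ?(ler_nat _ 2) //.
have := inv_subr2_le_half; have : d%:R + 1 <= r%:R :> rat by rewrite natr1 ler_nat.
lra.
Qed.

Lemma bin2_le_sum_chord (I : finType) (deg : I -> nat) (x0 x1 : I) :
  x1 != x0 -> (forall x, 2 <= deg x)%N -> deg x0 = r ->
  'C(r, 2)%:R <= \sum_x chord (deg x).
Proof.
move=> x1_neq_x0 deg_ge2 deg_x0.
rewrite (bigD1 x0) // (bigD1 x1) //= deg_x0 chord_at_r.
have : 0 <= \sum_(x | (x != x0) && (x != x1)) chord (deg x).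
  by apply: sumr_ge0 => x _; exact: le_trans ler01 (chord_ge1 (deg_ge2 x)).
have := chord_ge1 (deg_ge2 x1); lra.
Qed.

Lemma sum_chord (I : finType) (deg : I -> nat) :
  \sum_x chord (deg x)
    = lambda r * ((\sum_x deg x)%N%:R - (2 * #|I|)%N%:R) + #|I|%:R.
Proof.
by rewrite big_split /= -mulr_sumr sumrB !sumr_const natr_sum natrM mulr_natr.
Qed.

End Chord.

Theorem lemma3p5 (m r : nat) (A : seq {set 'I_m}) :
  (2 <= m)%N -> (4 <= r)%N ->
  double_cover A -> (size A <= r)%N ->
  ((n_intersecting_pairs A)%:R : rat)
    <= lambda r * ((total_size A)%:R - (2 * m)%N%:R) + m%:R.
Proof.
move=> m_ge2 r_ge4 cover size_le_r.
have := sum_chord r (degree A); rewrite !card_ord -total_size_degree => <-.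
have degree_le_r x : (degree A x <= r)%N by rewrite (leq_trans (count_size _ _)).
case: (pickP (fun x => r <= degree A x)%N) => [x0 r_le_x0 | degree_lt_r].
  have [x1 x1_neq_x0] : exists x1 : 'I_m, x1 != x0.
    have : (0 < #|predC1 x0|)%N by rewrite cardC1 card_ord; lia.
    by case/card_gt0P => x1; exists x1.
  apply: le_trans (bin2_le_sum_chord r_ge4 x1_neq_x0 cover _); last first.
    by apply/eqP; rewrite eqn_leq degree_le_r.
  rewrite ler_nat (leq_trans (n_intersecting_pairs_le_bin2_size A)) //.
  exact: leq_bin2l.
apply: le_trans (_ : _ <= \sum_x 'C(degree A x, 2)%:R) _.
  by rewrite -natr_sum ler_nat n_intersecting_pairs_le_sum_bin2.
apply: ler_sum => x _; apply: (bin2_le_chord r_ge4 (cover x)).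
by rewrite ltnNge (negbT (degree_lt_r x)).
Qed.
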